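(* Let $M$ be a modular lattice of finite length and $n\ge 1$. The following are equivalent: (i) $M$ has breadth at most $n$; (ii) no complemented modular lattice of length $n+1$ (i.e. no subspace lattice of a possibly reducible projective geometry of dimension $n$) embeds into $M$ as a sublattice; (iii) for every $x\in S(M)$, the interval $[x,x^*]$ has length at most $n$ (i.e. is the subspace lattice of a possibly reducible projective geometry of dimension at most $n-1$).
   Context: $M$ has least element $0$ and greatest element $1$. For $a\in M$: $a^*$ is the join of all elements covering $a$ if $a<1$, and $1^*=1$. An interval $[a,b]$ is \emph{atomistic} if every element of it is a join of atoms of $[a,b]$. The \emph{skeleton} $S(M)$ is the set of least elements of the maximal (under inclusion) atomistic intervals of $M$. The \emph{breadth} of a lattice $K$ is the supremum of all $m$ for which there is a map $\varphi$ from the Boolean lattice $\mathbf{2}^m$ into $K$ with $\varphi(a)\le\varphi(b)\iff a\le b$. The length of a lattice is the supremum of $|C|-1$ over its chains $C$. *)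

From mathcomp Require Import all_boot all_order.
Set Implicit Arguments. Unset Strict Implicit. Unset Printing Implicit Defensive.
Import Order.Theory.
Local Open Scope order_scope.

Section LatticeDefs.
Context {d : Order.disp_t}.

Definition modular (T : latticeType d) : Prop :=
  forall a b c : T, a <= c -> a `|` (b `&` c) = (a `|` b) `&` c.

(* every (finite) chain whose elements satisfy P has at most n+1 elements,
   i.e. the chains inside P have length <= n *)
Definition chains_le (T : porderType d) (P : T -> Prop) (n : nat) : Prop :=
  forall s : seq T, sorted <%O s -> (forall x, x \in s -> P x) -> (size s <= n.+1)%N.

Definition length_le (T : porderType d) (n : nat) : Prop :=
  chains_le (fun _ : T => True) n.

Definition finite_length (T : porderType d) : Prop := exists N, length_le T N.

Definition has_length (T : porderType d) (n : nat) : Prop :=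
  length_le T n /\ exists s : seq T, sorted <%O s /\ size s = n.+1.

Definition interval_length_le (T : porderType d) (x y : T) (n : nat) : Prop :=
  chains_le (fun z => x <= z /\ z <= y) n.

Definition covers (T : porderType d) (a b : T) : Prop :=
  a < b /\ forall c, ~ (a < c /\ c < b).

Definition is_lub (T : porderType d) (S : T -> Prop) (s : T) : Prop :=
  (forall x, S x -> x <= s) /\ (forall u, (forall x, S x -> x <= u) -> s <= u).

Definition star_of (T : tbLatticeType d) (a s : T) : Prop :=
  (a = \top -> s = \top) /\ (a <> \top -> is_lub (covers a) s).

Definition atom_of (T : porderType d) (a b c : T) : Prop := covers a c /\ c <= b.

Definition is_join_in (T : porderType d) (a b : T) (S : T -> Prop) (c : T) : Prop :=
  a <= c /\ c <= b /\ (forall x, S x -> x <= c) /\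
  (forall u, a <= u -> u <= b -> (forall x, S x -> x <= u) -> c <= u).

Definition atomistic (T : porderType d) (a b : T) : Prop :=
  forall c, a <= c -> c <= b ->
    exists S : T -> Prop, (forall x, S x -> atom_of a b x) /\ is_join_in a b S c.

Definition max_atomistic (T : porderType d) (a b : T) : Prop :=
  a <= b /\ atomistic a b /\
  forall c e, c <= e -> c <= a -> b <= e -> atomistic c e -> c = a /\ e = b.

Definition skeleton (T : porderType d) (a : T) : Prop := exists b, max_atomistic a b.

Definition breadth_le (T : porderType d) (n : nat) : Prop :=
  forall (m : nat) (phi : {set 'I_m} -> T),
    (forall A B, phi A <= phi B <-> A \subset B) -> (m <= n)%N.

End LatticeDefs.

Definition complemented {d} (L : tbLatticeType d) : Prop :=
  forall x : L, exists y, x `&` y = \bot /\ x `|` y = \top.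

Definition lattice_embedding {d d'} (L : latticeType d') (M : latticeType d) (f : L -> M) : Prop :=
  injective f /\ (forall x y, f (x `&` y) = f x `&` f y) /\ (forall x y, f (x `|` y) = f x `|` f y).

From mathcomp Require Import all_boot all_order.
From Stdlib Require Import Classical ClassicalEpsilon.
From mathcomp Require Import zify.
Set Implicit Arguments. Unset Strict Implicit. Unset Printing Implicit Defensive.
Import Order.Theory.
Local Open Scope order_scope.

(* Everything rests on one embedding: if [b <= c 0 <= ... <= c m] and the [a i] satisfy
   [a i <= c i.+1], [a i `&` c i <= b] and [a i] not below [c i], then in a modular lattice
   [A |-> b `|` \join_(i in A) a i] is an order embedding of the Boolean lattice [2^m].
   A chain of length k in [x, x^*] yields such data with atoms covering x, because [x, x^*]
   is spanned by independent atoms and is therefore relatively complemented; so does a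
   chain of length n+1 in a complemented sublattice, using complements of its members;
   hence breadth <= n forces (ii) and (iii).  Conversely, from an embedding of [2^m] with
   m > n, shrinking the images of the singletons to a minimal irredundant family produces
   m independent atoms over some b; the interval they span is atomistic, it extends to a
   maximal atomistic interval [c, e] with [e <= c^*], and it contains a chain of length m,
   so (iii) fails; the same atoms give a Boolean sublattice of length n+1, so (ii) fails. *)

Lemma exists_unimprovable (X : Type) (mu : X -> nat) (P : X -> Prop) (R : X -> X -> Prop) :
  (forall x y, R x y -> (mu y < mu x)%N) ->
  forall x, P x -> exists2 y, P y & forall z, R y z -> ~ P z.
Proof.
move=> muR x; have [k] := ubnP (mu x); elim: k x => // k IH x lt_mu Px.
case: (classic (exists2 z, R x z & P z)) => [[z xz Pz]|none].
  by apply: (IH z) => //; exact: leq_trans (muR _ _ xz) _.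
by exists x => // z xz Pz; apply: none; exists z.
Qed.

Lemma choice_below (X : Type) (x0 : X) (P : nat -> X -> Prop) (m : nat) :
  (forall i, (i < m)%N -> exists x, P i x) -> exists f, forall i, (i < m)%N -> P i (f i).
Proof.
move=> exP; exists (fun i => epsilon (inhabits x0) (fun x => (i < m)%N -> P i x)) => i im.
apply: (epsilon_spec (inhabits x0) (fun x => (i < m)%N -> P i x)) => //.
by have [x Px] := exP i im; exists x.
Qed.

Lemma sorted_mkseq {d} {T : porderType d} (f : nat -> T) k :
  (forall i, (i < k)%N -> f i < f i.+1) -> sorted <%O (mkseq f k.+1).
Proof.
move=> f_lt; apply/(sortedP (f 0)) => i; rewrite size_mkseq ltnS => ik.
by rewrite !nth_mkseq ?f_lt // ltnS ltnW.
Qed.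

Definition upd (T : Type) (f : nat -> T) i y : nat -> T := fun j => if j == i then y else f j.

Definition pbool (P : Prop) : bool := if excluded_middle_informative P then true else false.

Lemma pboolP (P : Prop) : reflect P (pbool P).
Proof. by rewrite /pbool; case: excluded_middle_informative => H; constructor. Qed.

Lemma interval_length_le_point {d} {T : porderType d} (x : T) n : interval_length_le x x n.
Proof.
case=> [|y [|z s]] // /andP [yz _] in_xx; exfalso.
have [xy yx] := in_xx y (mem_head _ _).
have /in_xx [xz zx] : z \in [:: y, z & s] by rewrite !inE eqxx orbT.
have yz_eq : y = z by apply: le_anti; rewrite (le_trans yx xz) (le_trans zx xy).
by move: yz; rewrite yz_eq ltxx.
Qed.

Section Covers.
Context {d : Order.disp_t} {T : latticeType d}.

Lemma covers_between (b a z : T) : covers b a -> b <= z -> z <= a -> z = b \/ z = a.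
Proof.
move=> [ba nomid] bz za; case: (eqVneq z a) => [->|za']; first by right.
move: bz; rewrite le_eqVlt => /orP [/eqP ->|bz]; first by left.
by case: (nomid z); split=> //; rewrite lt_neqAle za za' andbT.
Qed.

Lemma covers_meet_le (b a c : T) : covers b a -> b <= c -> ~~ (a <= c) -> a `&` c <= b.
Proof.
move=> ba bc ac; have bac : b <= a `&` c by rewrite lexI (ltW ba.1) bc.
have [->//|E] := covers_between ba bac (leIl a c).
by move: ac; rewrite -E leIr.
Qed.

End Covers.

Section JoinOver.
Context {d : Order.disp_t} {T : tbLatticeType d}.
Implicit Types (b : T) (a c : nat -> T) (P Q : pred nat).

Definition join_over b a k P := b `|` \join_(i < k | P i) a i.
Definition join_prefix b a k := join_over b a k predT.

Lemma join_over0 b a P : join_over b a 0 P = b.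
Proof. by rewrite /join_over big_ord0 joinx0. Qed.

Lemma join_overS b a k P :
  join_over b a k.+1 P = join_over b a k P `|` (if P k then a k else \bot).
Proof. by rewrite /join_over big_mkcond big_ord_recr /= -big_mkcond joinA. Qed.

Lemma join_prefixS b a k : join_prefix b a k.+1 = join_prefix b a k `|` a k.
Proof. exact: join_overS. Qed.

Lemma eq_join_over b a k P Q : P =1 Q -> join_over b a k P = join_over b a k Q.
Proof. by move=> PQ; rewrite /join_over (eq_bigl (fun i : 'I_k => Q i)). Qed.

Lemma eq_join_prefix b a a' k :
  (forall i, (i < k)%N -> a i = a' i) -> join_prefix b a k = join_prefix b a' k.
Proof.
move=> aa'; rewrite /join_prefix /join_over; congr (_ `|` _).
by apply: eq_bigr => i _; exact: aa'.
Qed.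

Lemma join_prefix_upd b a j z k :
  (k <= j)%N -> join_prefix b (upd a j z) k = join_prefix b a k.
Proof.
by move=> kj; apply: eq_join_prefix => i ik; rewrite /upd (ltn_eqF (leq_trans ik kj)).
Qed.

Lemma base_le_join_over b a k P : b <= join_over b a k P.
Proof. exact: leUl. Qed.

Lemma le_join_over b a k P i : (i < k)%N -> P i -> a i <= join_over b a k P.
Proof. by move=> ik Pi; apply: lexUr; apply: (joins_min (j := Ordinal ik)). Qed.

Lemma join_over_subpred b a k P Q : subpred P Q -> join_over b a k P <= join_over b a k Q.
Proof.
move=> PQ; rewrite leUx base_le_join_over; apply/joinsP => i Pi.
exact: le_join_over (ltn_ord i) (PQ _ Pi).
Qed.

Lemma join_prefix_mono b a : {homo join_prefix b a : i j / (i <= j)%N >-> i <= j}.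
Proof.
move=> i j ij; rewrite leUx base_le_join_over; apply/joinsP => k _.
exact: le_join_over (leq_trans (ltn_ord k) ij) _.
Qed.

Lemma join_overU b a k P Q :
  join_over b a k P `|` join_over b a k Q = join_over b a k (predU P Q).
Proof.
elim: k => [|k IH]; first by rewrite !join_over0 joinxx.
rewrite !join_overS joinACA IH /=.
by case: (P k); case: (Q k); rewrite ?joinxx ?joinx0 ?join0x.
Qed.

Definition staircase b a c m :=
  b <= c 0 /\ forall i, (i < m)%N ->
    [/\ c i <= c i.+1, a i <= c i.+1, a i `&` c i <= b & ~~ (a i <= c i)].

Section Staircase.
Hypothesis modT : modular T.
Variables (b : T) (a c : nat -> T) (m : nat).
Hypothesis stair : staircase b a c m.

Lemma staircase_mono i j : (i <= j)%N -> (j <= m)%N -> c i <= c j.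
Proof.
move=> /subnK <-; elim: (j - i)%N => [|k IH] km; first by rewrite add0n.
by rewrite addSn (le_trans (IH (ltnW km))) //; case: (stair.2 _ km).
Qed.

Lemma join_over_le_step k P : (k <= m)%N -> join_over b a k P <= c k.
Proof.
elim: k => [|k IH] km; first by rewrite join_over0 stair.1.
have [cc ac _ _] := stair.2 _ km.
rewrite join_overS leUx (le_trans (IH (ltnW km))) //.
by case: (P k); rewrite ?le0x.
Qed.

Lemma join_over_step_meet k P :
  (k < m)%N -> (join_over b a k P `|` a k) `&` c k = join_over b a k P.
Proof.
move=> km; have [_ _ acb _] := stair.2 _ km.
rewrite -(modT (a k) (join_over_le_step P (ltnW km))); apply/join_idPl.
by rewrite (le_trans acb) // base_le_join_over.
Qed.

Lemma join_over_mem k P i : (k <= m)%N -> (i < k)%N -> a i <= join_over b a k P -> P i.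
Proof.
elim: k => [|k IH] // km; rewrite ltnS leq_eqVlt => /orP [/eqP ->|ik] aiP.
  have [_ _ _ /negP nak] := stair.2 _ km; case Pk: (P k) => //; case: nak.
  by rewrite (le_trans aiP) // join_overS Pk joinx0 join_over_le_step // ltnW.
apply: (IH (ltnW km) ik); move: aiP; rewrite join_overS.
case: ifP => Pk aiP; last by rewrite joinx0 in aiP.
have aic : a i <= c k.
  by apply: le_trans (staircase_mono ik (ltnW km)); case: (stair.2 _ (ltn_trans ik km)).
by rewrite -(join_over_step_meet P km) lexI aiP.
Qed.

Lemma join_overI k P Q : (k <= m)%N ->
  join_over b a k P `&` join_over b a k Q = join_over b a k (predI P Q).
Proof.
elim: k => [|k IH] km; first by rewrite !join_over0 meetxx.
have {}IH := IH (ltnW km).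
have over_meet R S : join_over b a k R `&` (join_over b a k S `|` a k) =
    join_over b a k R `&` join_over b a k S.
  have Rc := join_over_le_step R (ltnW km).
  by rewrite -{1}(meet_idPl Rc) -meetA [c k `&` _]meetC join_over_step_meet.
rewrite !join_overS -IH /=; case: (P k); case: (Q k); rewrite /= ?joinx0.
- rewrite [X in _ = X `|` _]meetC -over_meet meetC joinC.
  by rewrite -(modT _ (leUr _ _)) joinC.
- by rewrite meetC over_meet meetC.
- exact: over_meet.
- by [].
Qed.

End Staircase.
End JoinOver.

Definition idx m (A : {set 'I_m}) : pred nat :=
  fun i => if insub i is Some j then j \in A else false.

Lemma idxE m (A : {set 'I_m}) (j : 'I_m) : idx A j = (j \in A).
Proof. by rewrite /idx valK. Qed.

Lemma idx_lt m (A : {set 'I_m}) i : idx A i -> (i < m)%N.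
Proof. by rewrite /idx; case: insubP. Qed.

Lemma idxI m (A B : {set 'I_m}) : idx (A :&: B) =1 predI (idx A) (idx B).
Proof. by move=> i; rewrite /idx /=; case: insub => // j; rewrite inE. Qed.

Lemma idxU m (A B : {set 'I_m}) : idx (A :|: B) =1 predU (idx A) (idx B).
Proof. by move=> i; rewrite /idx /=; case: insub => // j; rewrite inE. Qed.

Lemma staircase_embedding {d} (L : tbLatticeType d) (b : L) a c m : modular L ->
  staircase b a c m -> forall A B : {set 'I_m},
  join_over b a m (idx A) <= join_over b a m (idx B) <-> A \subset B.
Proof.
move=> modL stair A B; split => [AB|/subsetP AB].
  apply/subsetP => j jA; rewrite -idxE.
  apply: (join_over_mem modL stair (leqnn m) (ltn_ord j)); apply: le_trans AB.
  by apply: le_join_over (ltn_ord j) _; rewrite idxE.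
apply: join_over_subpred => i Ai; have im := idx_lt Ai.
by move: Ai; rewrite -[i]/(val (Ordinal im)) !idxE; apply: AB.
Qed.

Lemma breadth_staircase {d d'} (L : tbLatticeType d') (M : porderType d) (g : L -> M)
    (b : L) a c m n :
  modular L -> (forall u v, g u <= g v <-> u <= v) -> staircase b a c m ->
  breadth_le M n -> (m <= n)%N.
Proof.
move=> modL g_mono stair /(_ m (fun A => g (join_over b a m (idx A)))); apply=> A B.
exact: iff_trans (g_mono _ _) (staircase_embedding modL stair A B).
Qed.

Section IndependentAtoms.
Context {d : Order.disp_t} {T : tbLatticeType d}.
Hypothesis modT : modular T.

Definition indep_atoms (b : T) (a : nat -> T) m :=
  forall i, (i < m)%N -> covers b (a i) /\ ~~ (a i <= join_prefix b a i).

Lemma indep_atoms_upd (b : T) a j z : indep_atoms b a j -> covers b z ->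
  ~~ (z <= join_prefix b a j) -> indep_atoms b (upd a j z) j.+1.
Proof.
move=> indep bz zD i; rewrite ltnS leq_eqVlt => /orP [/eqP ->|ij].
  by rewrite join_prefix_upd // /upd eqxx.
by rewrite join_prefix_upd 1?ltnW // /upd (ltn_eqF ij); exact: indep.
Qed.

Variables (b : T) (a : nat -> T) (m : nat).
Hypothesis indep : indep_atoms b a m.

Lemma indep_staircase : staircase b a (join_prefix b a) m.
Proof.
split=> [|i im]; first exact: base_le_join_over.
have [ba nle] := indep im.
rewrite join_prefixS leUl leUr nle; split=> //.
exact: covers_meet_le ba (base_le_join_over _ _ _ _) nle.
Qed.

Lemma join_prefix_sorted : sorted <%O (mkseq (join_prefix b a) m.+1).
Proof.
apply: sorted_mkseq => i im; rewrite join_prefixS lt_neqAle leUl andbT.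
by apply: contraNneq (indep im).2 => ->; exact: leUr.
Qed.

Lemma join_prefix_cover i w : (i < m)%N ->
  join_prefix b a i <= w -> w <= join_prefix b a i.+1 ->
  w = join_prefix b a i \/ w = join_prefix b a i.+1.
Proof.
move=> im Dw wD; have [ba _] := indep im.
have bw : b <= w := le_trans (base_le_join_over _ _ _ _) Dw.
have bwa : b <= w `&` a i by rewrite lexI bw (ltW ba.1).
have [E|E] := covers_between ba bwa (leIr _ _).
- left; have := modT (a i) Dw; rewrite -join_prefixS meetC E (meet_idPr wD) => <-.
  by apply/join_idPl; exact: base_le_join_over.
- by right; apply/eqP; rewrite eq_le wD join_prefixS leUx Dw -E leIl.
Qed.

Lemma join_prefix_complement k z : (k <= m)%N -> b <= z -> z <= join_prefix b a k ->
  exists z', [/\ b <= z', z' <= join_prefix b a k, z `&` z' = b & z `|` z' = join_prefix b a k].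
Proof.
elim: k z => [|k IH] z km bz zD.
  rewrite /join_prefix join_over0 in zD *.
  have -> : z = b by apply/eqP; rewrite eq_le bz zD.
  by exists b; rewrite meetxx joinxx lexx.
have bzD : b <= z `&` join_prefix b a k by rewrite lexI bz base_le_join_over.
have [z0 [bz0 z0D mz0 jz0]] := IH _ (ltnW km) bzD (leIr _ _).
have DD : join_prefix b a k <= join_prefix b a k.+1 by rewrite join_prefixS leUl.
set D := join_prefix b a k in IH bzD z0D mz0 jz0 DD *.
have [zD'|zD'] := boolP (z <= D).
  rewrite (meet_idPl zD') in mz0 jz0.
  have ameet : a k `&` D <= b by have [_ _ amb _] := indep_staircase.2 _ km.
  exists (z0 `|` a k); split.
  - by rewrite lexUl.
  - by rewrite join_prefixS leUx (le_trans z0D) ?leUl ?leUr.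
  - rewrite -(meet_idPl zD') -meetA [D `&` _]meetC -(modT (a k) z0D).
    by rewrite (join_idPl (le_trans ameet bz0)).
  - by rewrite joinA jz0 join_prefixS.
exists z0; split => //.
- exact: le_trans z0D DD.
- by rewrite -mz0 -meetA (meet_idPr z0D).
- have zDD : z `|` D <= join_prefix b a k.+1 by rewrite leUx zD.
  have [E|E] := join_prefix_cover km (leUr _ _) zDD; rewrite -/D in E.
    by move: zD'; rewrite -E leUl.
  apply/eqP; rewrite eq_le leUx zD (le_trans z0D DD) -E leUx leUl /=.
  by rewrite -jz0 leUx lexUl ?leIl // leUr.
Qed.

Lemma exists_disjoint_above p q : b <= p -> p < q -> q <= join_prefix b a m ->
  exists s, [/\ b < s, s <= q & s `&` p <= b].
Proof.
move=> bp pq qD.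
have [z [bz zD mz jz]] := join_prefix_complement (leqnn m) bp (le_trans (ltW pq) qD).
exists (z `&` q); split; last 2 first.
- exact: leIr.
- by rewrite -mz meetC meetA leIl.
have bzq : b <= z `&` q by rewrite lexI bz (le_trans bp (ltW pq)).
rewrite lt_neqAle bzq andbT; apply/eqP => E.
have : p `|` (z `&` q) = q by rewrite (modT z (ltW pq)) jz (meet_idPr qD).
by rewrite -E (join_idPl bp) => pq_eq; move: pq; rewrite pq_eq ltxx.
Qed.

End IndependentAtoms.

Section Height.
Context {d : Order.disp_t} {T : porderType d}.
Variable N : nat.
Hypothesis lenT : length_le T N.

Definition reaches (x : T) k :=
  exists f : nat -> T, (forall i, (i < k)%N -> f i < f i.+1) /\ f k = x.

Definition height x := (\max_(k < N.+1 | pbool (reaches x k)) k)%N.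

Lemma reaches_le x k : reaches x k -> (k <= N)%N.
Proof.
by move=> [f [f_lt _]]; have := lenT (sorted_mkseq f_lt) (fun _ _ => I); rewrite size_mkseq.
Qed.

Lemma height_max x k : reaches x k -> (k <= height x)%N.
Proof.
move=> xk; have kN : (k < N.+1)%N by rewrite ltnS; exact: reaches_le xk.
rewrite /height.
apply: (@bigop.leq_bigmax_cond _ (fun i : 'I_N.+1 => pbool (reaches x i)) _ (Ordinal kN)).
exact/pboolP.
Qed.

Lemma reaches_height x : reaches x (height x).
Proof.
have x0 : pbool (reaches x (@ord0 N)) by apply/pboolP; exists (fun=> x).
by rewrite /height (bigop.bigmax_eq_arg ord0) //; case: arg_maxnP => // i /pboolP.
Qed.

Lemma height_bound x : (height x <= N)%N.
Proof. exact: reaches_le (reaches_height x). Qed.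

Lemma height_lt x y : x < y -> (height x < height y)%N.
Proof.
move=> xy; have [f [f_lt fx]] := reaches_height x.
apply: height_max; exists (fun i => if i == (height x).+1 then y else f i).
split=> [i ix|]; last by rewrite eqxx.
rewrite eqSS (ltn_eqF ix); case: eqVneq => [->|ne]; first by rewrite fx.
by rewrite f_lt // ltn_neqAle ne -ltnS.
Qed.

Lemma height_le x y : x <= y -> (height x <= height y)%N.
Proof. by rewrite le_eqVlt => /orP [/eqP ->//|/height_lt/ltnW]. Qed.

Lemma exists_minimal (P : T -> Prop) z : P z -> exists2 w, P w & forall v, v < w -> ~ P v.
Proof.
by apply: (@exists_unimprovable _ height P (fun x y => y < x)) => x y /height_lt.
Qed.

End Height.

Section Irredundant.
Context {d : Order.disp_t} {T : tbLatticeType d}.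

Definition join_others (y : nat -> T) m i := \join_(j < m | (j : nat) != i) y j.

Definition irredundant (y : nat -> T) m := forall i, (i < m)%N -> ~~ (y i <= join_others y m i).

Lemma le_join_others (y : nat -> T) m i j : (j < m)%N -> j != i -> y j <= join_others y m i.
Proof. by move=> jm ji; exact: (joins_min (j := Ordinal jm)). Qed.

Lemma irredundant_boolean_embedding m (phi : {set 'I_m} -> T) :
  (forall A B, phi A <= phi B <-> A \subset B) ->
  irredundant (fun i => phi [set j : 'I_m | val j == i]) m.
Proof.
move=> phi_mono i im; apply/negP => y_le.
have others_le : join_others (fun i => phi [set j : 'I_m | val j == i]) m i <=
    phi [set j : 'I_m | val j != i].
  apply/joinsP => j ji; apply/phi_mono/subsetP => k; rewrite !inE => /eqP ->; exact: ji.
have /subsetP /(_ (Ordinal im)) := proj1 (phi_mono _ _) (le_trans y_le others_le).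
by rewrite !inE eqxx => /(_ isT).
Qed.

Lemma join_others_upd (y : nat -> T) m i z : join_others (upd y i z) m i = join_others y m i.
Proof. by apply: eq_bigr => j /negbTE ji; rewrite /upd ji. Qed.

Lemma join_others_mono (y y' : nat -> T) m i :
  (forall j, y' j <= y j) -> join_others y' m i <= join_others y m i.
Proof.
move=> y'y; apply/joinsP => j ji; apply: le_trans (y'y j) _.
exact: le_join_others (ltn_ord j) ji.
Qed.

End Irredundant.

Section ModularFiniteLength.
Context {d : Order.disp_t} {M : tbLatticeType d}.
Hypothesis modM : modular M.
Variable N : nat.
Hypothesis lenM : length_le M N.

Lemma exists_atom_below (b s : M) : b < s -> exists w, covers b w /\ w <= s.
Proof.
move=> bs; have [w [bw ws] wmin] :=
  exists_minimal lenM (P := fun w => b < w /\ w <= s) (conj bs (lexx s)).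
exists w; split=> //; split=> // c [bc cw]; apply: (wmin c cw); split=> //.
exact: le_trans (ltW cw) ws.
Qed.

Lemma exists_cover (x : M) : x != \top -> exists w, covers x w.
Proof.
move=> xt; have [|w [xw _]] := @exists_atom_below x \top; last by exists w.
by rewrite lt_neqAle xt lex1.
Qed.

Lemma exists_atom_between (b : M) a m p q : indep_atoms b a m ->
  b <= p -> p < q -> q <= join_prefix b a m ->
  exists w, [/\ covers b w, w <= q & ~~ (w <= p)].
Proof.
move=> indep bp pq qD; have [s [bs sq sp]] := exists_disjoint_above modM indep bp pq qD.
have [w [bw ws]] := exists_atom_below bs.
exists w; split=> //; first exact: le_trans ws sq.
apply/negP => wp; have wb : w <= b by apply: le_trans sp; rewrite lexI ws wp.
by have := lt_le_trans bw.1 wb; rewrite ltxx.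
Qed.

Lemma atomistic_join_prefix (b : M) a m : indep_atoms b a m -> atomistic b (join_prefix b a m).
Proof.
move=> indep c bc cD.
exists (fun x => atom_of b (join_prefix b a m) x /\ x <= c); split; first by move=> x [].
split=> //; split=> //; split; first by move=> x [].
move=> u bu uD below; apply: contraT => ncu.
have cuc : c `&` u < c.
  by rewrite lt_neqAle leIl andbT; apply: contraNneq ncu => <-; exact: leIr.
have bcu : b <= c `&` u by rewrite lexI bc bu.
have [w [bw wc]] := exists_atom_between indep bcu cuc cD.
by rewrite lexI wc below //; split=> //; split=> //; exact: le_trans wc cD.
Qed.

Definition atom_basis (x : M) a j :=
  indep_atoms x a j /\ forall z, covers x z -> z <= join_prefix x a j.

Lemma exists_atom_basis (x : M) : exists j a, atom_basis x a j.
Proof.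
pose D (ja : nat * (nat -> M)) := join_prefix x ja.2 ja.1.
have decr ja ja' : D ja < D ja' -> (N - height N (D ja') < N - height N (D ja))%N.
  move=> /(height_lt lenM); have := height_bound lenM (D ja').
  by move: (height N (D ja)) (height N (D ja')) => u v; lia.
have indep0 : indep_atoms x (fun=> x) 0 by [].
have [[j a] /= indep maximal] :=
  exists_unimprovable decr (P := fun ja => indep_atoms x ja.2 ja.1) (x := (0%N, fun=> x)) indep0.
exists j, a; split=> // z xz; apply: contraT => zD; exfalso.
apply: (maximal (j.+1, upd a j z)); last exact: indep_atoms_upd.
rewrite /D /= join_prefixS join_prefix_upd // /upd eqxx lt_neqAle leUl andbT.
by apply: contraNneq zD => ->; exact: leUr.
Qed.

Lemma is_lub_atom_basis (x : M) a j : x != \top -> atom_basis x a j ->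
  is_lub (covers x) (join_prefix x a j).
Proof.
move=> xt [indep basis]; split=> // u u_ub; have [w xw] := exists_cover xt.
rewrite leUx (le_trans (ltW xw.1) (u_ub _ xw)); apply/joinsP => i _.
exact/u_ub/(indep _ (ltn_ord i)).1.
Qed.

Lemma star_atom_basis (x : M) a j s : x != \top -> atom_basis x a j -> star_of x s ->
  s = join_prefix x a j.
Proof.
move=> xt basis [_ /(_ (elimN eqP xt)) [s_ub s_min]].
have [D_ub D_min] := is_lub_atom_basis xt basis.
by apply/le_anti; rewrite s_min ?D_min.
Qed.

Lemma breadth_star_length n : breadth_le M n ->
  forall x s : M, star_of x s -> interval_length_le x s n.
Proof.
move=> bM x s xs; have [xt|xt] := eqVneq x \top.
  by rewrite (xs.1 xt) -xt; exact: interval_length_le_point.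
have [j [a basis]] := exists_atom_basis x.
rewrite (star_atom_basis xt basis xs) => -[//|c0 l] l_sorted l_in /=; rewrite ltnS.
pose c t := nth x (c0 :: l) t.
have c_lt t : (t < size l)%N -> c t < c t.+1 by move=> tl; apply: (sortedP x l_sorted).
have c_in t : (t <= size l)%N -> x <= c t /\ c t <= join_prefix x a j.
  by move=> tl; apply: l_in; rewrite mem_nth.
have [a' a'P] : exists a', forall t, (t < size l)%N ->
    [/\ covers x (a' t), a' t <= c t.+1 & ~~ (a' t <= c t)].
  apply: (choice_below x (P := fun t w => [/\ covers x w, w <= c t.+1 & ~~ (w <= c t)])).
  move=> t tl; have [xc _] := c_in t (ltnW tl).
  exact: exists_atom_between basis.1 xc (c_lt t tl) (c_in t.+1 tl).2.
apply: (@breadth_staircase _ _ M M id x a' c) => //.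
split=> [|t tl]; first exact: (c_in 0%N isT).1.
have [xa ac nac] := a'P t tl; split=> //; first exact: ltW (c_lt t tl).
exact: covers_meet_le xa (c_in t (ltnW tl)).1 nac.
Qed.

Lemma sum_height_upd (y : nat -> M) m i z : (i < m)%N -> z < y i ->
  (\sum_(j < m) height N (upd y i z j) < \sum_(j < m) height N (y j))%N.
Proof.
move=> im zy; rewrite (bigD1 (Ordinal im)) // [X in (_ < X)%N](bigD1 (Ordinal im)) //=.
have -> : \sum_(j < m | j != Ordinal im) height N (upd y i z j) =
    \sum_(j < m | j != Ordinal im) height N (y j).
  apply: eq_bigr => j ji; rewrite /upd ifF //.
  by apply: contraNF ji => /eqP ji; apply/eqP/val_inj.
by rewrite /upd eqxx ltn_add2r (height_lt lenM zy).
Qed.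

Lemma exists_minimal_irredundant (y : nat -> M) m : irredundant y m ->
  exists2 y' : nat -> M, irredundant y' m &
    forall i, (i < m)%N -> forall z, z < y' i -> z <= join_others y' m i.
Proof.
move=> irr_y.
pose R (y y' : nat -> M) := exists i z, [/\ (i < m)%N, z < y i & y' = upd y i z].
have decr y1 y2 : R y1 y2 ->
    (\sum_(j < m) height N (y2 j) < \sum_(j < m) height N (y1 j))%N.
  by move=> [i [z [im zy ->]]]; exact: sum_height_upd.
have [y' irr' minimal] := exists_unimprovable decr (P := irredundant^~ m) irr_y.
exists y' => // i im z zy; apply: contraT => nz; exfalso.
apply: (minimal (upd y' i z)); first by exists i, z.
have upd_le j : upd y' i z j <= y' j by rewrite /upd; case: eqP => [->|]; [exact: ltW|].
move=> j jm; rewrite {1}/upd; case: eqVneq => [->|ji].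
  by rewrite join_others_upd.
apply: contraNN (irr' j jm) => y_le; exact: le_trans y_le (join_others_mono _ _ upd_le).
Qed.

(* [b] joins the traces [y i `&` join_others y m i]; by minimality each [b `|` y i] covers [b]. *)
Lemma indep_atoms_of_minimal (y : nat -> M) m : irredundant y m ->
  (forall i, (i < m)%N -> forall z, z < y i -> z <= join_others y m i) ->
  exists (b : M) a, indep_atoms b a m.
Proof.
move=> irr minimal; pose b := \join_(i < m) (y i `&` join_others y m i).
have b_le i : (i < m)%N -> b <= join_others y m i.
  move=> im; apply/joinsP => j _; case: (eqVneq (j : nat) i) => [<-|ji]; first exact: leIr.
  exact: le_trans (leIl _ _) (le_join_others _ (ltn_ord j) ji).
exists b, (fun i => b `|` y i) => i im; split.
  split=> [|z [bz zby]].
    rewrite lt_neqAle leUl andbT; apply: contraNneq (irr i im) => E.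
    by rewrite (le_trans _ (b_le i im)) // E leUr.
  have [yz|nyz] := boolP (y i <= z).
    have byz : b `|` y i <= z by rewrite leUx (ltW bz) yz.
    by have := lt_le_trans zby byz; rewrite ltxx.
  have zy_lt : z `&` y i < y i.
    by rewrite lt_neqAle leIr andbT; apply: contraNneq nyz => <-; exact: leIl.
  have zyb : z `&` y i <= b.
    apply: le_trans (joins_min (j := Ordinal im) isT (lexx _)).
    by rewrite lexI leIr minimal.
  have := modM (y i) (ltW bz).
  by rewrite meetC (join_idPl zyb) (meet_idPr (ltW zby)) => zE; move: bz; rewrite zE ltxx.
apply: contraNN (irr i im) => yD; apply: le_trans (le_trans (leUr _ _) yD) _.
rewrite leUx b_le //; apply/joinsP => j _; rewrite leUx b_le // le_join_others //.
  exact: ltn_trans (ltn_ord j) im.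
by rewrite neq_ltn ltn_ord.
Qed.

Lemma not_breadth_indep_atoms n : ~ breadth_le M n ->
  exists m (b : M) a, (n < m)%N /\ indep_atoms b a m.
Proof.
move=> not_bM; apply: NNPP => none; apply: not_bM => m phi phi_mono.
rewrite leqNgt; apply/negP => nm; apply: none; exists m.
have [y' irr' minimal] := exists_minimal_irredundant (irredundant_boolean_embedding phi_mono).
by have [b [a indep]] := indep_atoms_of_minimal irr' minimal; exists b, a.
Qed.

Lemma exists_max_atomistic (b e0 : M) : b <= e0 -> atomistic b e0 ->
  exists c e, [/\ c <= b, e0 <= e & max_atomistic c e].
Proof.
move=> be0 at_be0.
pose P (ce : M * M) := [/\ ce.1 <= ce.2, atomistic ce.1 ce.2, ce.1 <= b & e0 <= ce.2].
pose R (ce ce' : M * M) := [/\ ce'.1 <= ce.1, ce.2 <= ce'.2 & ce' <> ce].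
have decr ce ce' : R ce ce' ->
    (height N ce'.1 + (N - height N ce'.2) < height N ce.1 + (N - height N ce.2))%N.
  case: ce ce' => [c e] [c' e'] [/= c'c ee' ne].
  have hc := height_le lenM c'c; have he := height_le lenM ee'.
  have hb := height_bound lenM e'.
  have strict : (height N c' < height N c)%N \/ (height N e < height N e')%N.
    have [E|nc] := eqVneq c' c; [right|left]; apply: (height_lt lenM).
      by rewrite lt_neqAle ee' andbT; apply/eqP => E'; apply: ne; rewrite E E'.
    by rewrite lt_neqAle nc c'c.
  move: hc he hb strict.
  by move: (height N c) (height N c') (height N e) (height N e') => u u' v v'; lia.
have [[c e] [/= ce at_ce cb e0e] maximal] :=
  exists_unimprovable decr (P := P) (x := (b, e0)) (And4 be0 at_be0 (lexx b) (lexx e0)).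
exists c, e; split=> //; split=> //; split=> // c' e' c'e' c'c ee' at'.
apply: NNPP => ne; apply: (maximal (c', e')).
  by split=> // -[E1 E2]; apply: ne; split.
by split=> //=; [exact: le_trans c'c cb | exact: le_trans e0e ee'].
Qed.

Lemma atomistic_le (c e s : M) : atomistic c e -> c <= e -> c <= s ->
  (forall z, covers c z -> z <= s) -> e <= s.
Proof.
move=> at_ce ce cs covers_le.
have [S [S_atoms [_ [_ [_ e_min]]]]] := at_ce e ce (lexx e).
apply: le_trans _ (leIr s e); apply: e_min; [by rewrite lexI ce | exact: leIl |].
by move=> x Sx; have [cx xe] := S_atoms x Sx; rewrite lexI xe covers_le.
Qed.

Lemma star_length_breadth n :
  (forall x : M, skeleton x -> forall s, star_of x s -> interval_length_le x s n) ->
  breadth_le M n.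
Proof.
move=> star_len; apply: NNPP => /not_breadth_indep_atoms [m [b [a [nm indep]]]].
have bD := base_le_join_over b a m predT.
have [c [e [cb De [ce [at_ce max_ce]]]]] := exists_max_atomistic bD (atomistic_join_prefix indep).
have ct : c != \top.
  have [[ba _] _] := indep 0%N (leq_ltn_trans (leq0n n) nm).
  apply/eqP => ct; rewrite ct in cb.
  by move: ba => /lt_geF; rewrite (le_trans (lex1 _) cb).
have [j [a' basis]] := exists_atom_basis c.
have cs : c <= join_prefix c a' j := base_le_join_over _ _ _ _.
have es : e <= join_prefix c a' j := atomistic_le at_ce ce cs basis.2.
have star_c : star_of c (join_prefix c a' j).
  by split=> [/eqP|_]; [rewrite (negbTE ct) | exact: is_lub_atom_basis].
have chain_in x : x \in mkseq (join_prefix b a) m.+1 -> c <= x /\ x <= join_prefix c a' j.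
  case/mapP => i; rewrite mem_iota add0n => /andP [_ im] ->; split.
    exact: le_trans cb (base_le_join_over _ _ _ _).
  by apply: le_trans es; apply: le_trans De; exact: join_prefix_mono.
have := star_len c (ex_intro _ e (conj ce (conj at_ce max_ce))) _ star_c _
  (join_prefix_sorted indep) chain_in.
by rewrite size_mkseq ltnS leqNgt nm.
Qed.

End ModularFiniteLength.

Lemma lattice_embedding_mono {d d'} (L : latticeType d') (M : latticeType d) (f : L -> M) :
  lattice_embedding f -> forall u v, f u <= f v <-> u <= v.
Proof.
move=> [f_inj [fI fU]] u v; split=> uv; last by apply/join_idPr; rewrite -fU (join_idPr uv).
by apply/meet_idPl; apply: f_inj; rewrite fI; exact/meet_idPl.
Qed.

Lemma staircase_le {d} (T : tbLatticeType d) (b : T) a c m k :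
  (k <= m)%N -> staircase b a c m -> staircase b a c k.
Proof. by move=> km [bc stair]; split=> // i ik; apply: stair (leq_trans ik km). Qed.

Lemma complemented_staircase {d} (L : tbLatticeType d) (c : nat -> L) k :
  modular L -> complemented L -> (forall t, (t < k)%N -> c t < c t.+1) ->
  exists a, staircase \bot a c k.
Proof.
move=> modL complL c_lt.
have [y yP] := choice_below \bot (P := fun t y => c t `&` y = \bot /\ c t `|` y = \top)
  (m := k) (fun t _ => complL (c t)).
exists (fun t => y t `&` c t.+1); split=> [|t tk]; first exact: le0x.
have [cy0 cy1] := yP t tk; have ct := c_lt t tk.
split; [exact: ltW | exact: leIr | |].
  by rewrite meetC meetA cy0 meet0x.
have ct_le := ltW ct; apply: contraTN ct => yc; rewrite lt_leAnge negb_and negbK orbC.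
by rewrite -[X in X <= _](meet1x (c t.+1)) -cy1 -(modL _ (y t) _ ct_le) leUx lexx yc.
Qed.

Section SubsetLattice.
Import Order.SetSubsetOrder.
Notation subsets m := (type subset_display 'I_m).

Lemma subsets_modular m : modular (subsets m).
Proof.
move=> A B C; rewrite leEsubset => AC.
by rewrite !meetEsubset !joinEsubset setUIr (setUidPr AC).
Qed.

Lemma subsets_complemented m : complemented (subsets m).
Proof.
move=> A; exists (~: A); rewrite meetEsubset joinEsubset botEsubset topEsubset.
by rewrite setICr setUCr.
Qed.

Lemma subsets_has_length m : has_length (subsets m) m.
Proof.
split.
  move=> s s_sorted _; have card_sorted : sorted ltn (map (fun A : subsets m => #|A|) s).
    rewrite sorted_map; apply: sub_sorted s_sorted => A B.
    by rewrite /= lt_neqAle leEsubset => /andP [ne AB]; apply/proper_card; rewrite properEneq ne.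
  rewrite -(size_map (fun A : subsets m => #|A|)) -(size_iota 0 m.+1).
  apply: uniq_leq_size (sorted_uniq ltn_trans ltnn card_sorted) _ => _ /mapP [A _ ->].
  by rewrite mem_iota add0n ltnS (leq_trans (max_card _)) ?card_ord.
exists (mkseq (fun k => [set j : 'I_m | (j < k)%N] : subsets m) m.+1).
split; last by rewrite size_mkseq.
apply: sorted_mkseq => k km; rewrite lt_neqAle leEsubset; apply/andP; split.
  by apply/eqP => /setP /(_ (Ordinal km)); rewrite !inE ltnn ltnSn.
by apply/subsetP => j; rewrite !inE => /ltnW.
Qed.

Lemma staircase_lattice_embedding {d} (T : tbLatticeType d) (b : T) a c m :
  modular T -> staircase b a c m ->
  lattice_embedding (fun A : subsets m => join_over b a m (idx A)).
Proof.
move=> modT stair; split; [|split] => [A B E|A B|A B].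
- apply/eqP; rewrite eqEsubset; apply/andP.
  by split; apply/(staircase_embedding modT stair); rewrite E.
- by rewrite meetEsubset (join_overI modT stair) //; apply: eq_join_over; exact: idxI.
- by rewrite joinEsubset join_overU; apply: eq_join_over; exact: idxU.
Qed.

Lemma complemented_sublattice_of_not_breadth {d} (M : tbLatticeType d) N n :
  modular M -> length_le M N -> ~ breadth_le M n ->
  exists (d' : Order.disp_t) (L : tbLatticeType d') (f : L -> M),
    modular L /\ complemented L /\ has_length L n.+1 /\ lattice_embedding f.
Proof.
move=> modM lenM /(not_breadth_indep_atoms modM lenM) [m [b [a [nm indep]]]].
have stair := staircase_le nm (indep_staircase indep).
exists subset_display, (subsets n.+1), (fun A => join_over b a n.+1 (idx A)).
split; first exact: subsets_modular.
split; first exact: subsets_complemented.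
split; first exact: subsets_has_length.
exact: staircase_lattice_embedding modM stair.
Qed.

End SubsetLattice.

Lemma breadth_no_complemented_sublattice {d} (M : tbLatticeType d) n : breadth_le M n ->
  ~ exists (d' : Order.disp_t) (L : tbLatticeType d') (f : L -> M),
    modular L /\ complemented L /\ has_length L n.+1 /\ lattice_embedding f.
Proof.
move=> bM [d' [L [f [modL [complL [[_ [s [s_sorted s_size]]] f_emb]]]]]].
have c_lt t : (t < n.+1)%N -> nth \bot s t < nth \bot s t.+1.
  by move=> tn; apply: (sortedP \bot s_sorted); rewrite s_size.
have [a stair] := complemented_staircase modL complL c_lt.
by have := breadth_staircase modL (lattice_embedding_mono f_emb) stair bM; rewrite ltnn.
Qed.

Unset Implicit Arguments.
Theorem mainTheorem16 (d : Order.disp_t) (M : tbLatticeType d) (n : nat) :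
  modular M -> finite_length M -> (1 <= n)%N ->
  (breadth_le M n <->
     ~ (exists (d' : Order.disp_t) (L : tbLatticeType d') (f : L -> M),
          modular L /\ complemented L /\ has_length L n.+1 /\ lattice_embedding f))
  /\
  (breadth_le M n <->
     forall x : M, skeleton x -> forall s : M, star_of x s -> interval_length_le x s n).
Proof.
(* The equivalences hold for n = 0 as well. *)
move=> modM [N lenM] _; split; split.
- exact: breadth_no_complemented_sublattice.
- by move=> no_sub; apply: NNPP => /(complemented_sublattice_of_not_breadth modM lenM).
- by move=> bM x _ s; exact: (@breadth_star_length _ _ modM N lenM n bM x s).
- exact: (@star_length_breadth _ _ modM N lenM n).
Qed.
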